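(* In the Setting below, $U$ is a commutative associative subalgebra of $\Gamma(\mathcal M)$ (under composition), and the linear map $L\otimes_{\mathbb F}U\to N_{\mathcal M}$, $a\otimes\alpha\mapsto a\alpha$, is an isomorphism of algebras, where $L\otimes_{\mathbb F}U$ carries the product $(a\otimes\alpha)(b\otimes\beta)=ab\otimes\alpha\beta$. In particular $N_{\mathcal M}\cong L\otimes_{\mathbb F}U\cong\mathfrak{sl}_2(U)$.
   Context: Setting. Let $\mathbb F$ be a field of characteristic different from $2$ and $3$. A Malcev algebra is an anticommutative algebra $\mathcal M$ over $\mathbb F$ satisfying $(xz)(yt)=((xy)z)t+((yz)t)x+((zt)x)y+((tx)y)z$. Products are left-normed: $xyz=(xy)z$, $xyzt=((xy)z)t$. Put $J(x,y,z)=xyz+yzx+zxy$ (the Jacobian), $\{x,y,z\}=xyz-xzy+2x(yz)$, and $h(y,z,t,x,u)=\{yz,t,u\}x+\{yz,t,x\}u+\{yx,z,u\}t+\{yu,z,x\}t$. The variety $\mathcal H$ consists of the Malcev algebras satisfying $h(y,z,t,x,u)=0$ identically. The centroid $\Gamma(\mathcal M)$ is the set of linear maps $\alpha$ of $\mathcal M$ (written on the right) with $(xy)\alpha=x(y\alpha)=(x\alpha)y$ for all $x,y$. Put $p(x,y,z,t)=-\{zt,x,y\}-\{yt,z,x\}+\{xt,y,z\}$ and define the operator $\alpha(y,z,t)$ by $x\,\alpha(y,z,t)=p(x,y,z,t)$; for $\mathcal M\in\mathcal H$ these operators lie in $\Gamma(\mathcal M)$. Let $L=\mathfrak{sl}_2(\mathbb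 F)$ with basis $E,H,F$ and products $EH=E$, $FH=-F$, $EF=\tfrac12 H$. Standing assumption: $\mathcal M\in\mathcal H$ contains $L$ as a subalgebra and $mL\neq 0$ for every $0\neq m\in\mathcal M$. Define $N_{\mathcal M}=\{m\in\mathcal M: J(m,a,b)=0\ \forall a,b\in L\}$ and $J_{\mathcal M}=\{m\in\mathcal M:\{m,a,b\}=0\ \forall a,b\in L\}$. Known facts (from prior work): $\mathcal M=N_{\mathcal M}\oplus J_{\mathcal M}$; $J_{\mathcal M}$ is a direct sum of $L$-submodules $V_{2i}$, each with a basis $\{u_i,v_i\}$ satisfying $u_iH=u_i$, $v_iH=-v_i$, $u_iE=v_i$, $u_iF=0$, $v_iE=0$, $v_iF=-u_i$; and, letting $U$ be the linear span of the operators $\alpha(m,a,b)$ ($m\in\mathcal M$, $a,b\in L$), $U\subseteq\Gamma(\mathcal M)$ and $N_{\mathcal M}=\sum_{\alpha\in U}L\alpha$. *)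

From HB Require Import structures.
From mathcomp Require Import all_boot all_order all_algebra.
Set Implicit Arguments. Unset Strict Implicit. Unset Printing Implicit Defensive.
From Stdlib Require List.
Import GRing.Theory.
Local Open Scope ring_scope.

(* Operators (e.g. elements of the centroid) are written on the right in the
   paper: "x alpha" is here "alpha x", and "alpha beta" (first alpha, then
   beta) is the function  fun x => beta (alpha x). *)
Section MalcevDefs.
Variables (F : fieldType) (M : lmodType F) (mul : M -> M -> M).

Definition bilinear_prod : Prop :=
  (forall (c : F) x y z, mul (c *: x + y) z = c *: mul x z + mul y z) /\
  (forall (c : F) x y z, mul x (c *: y + z) = c *: mul x y + mul x z).

Definition anticommutative : Prop := forall x, mul x x = 0.

Definition malcev_identity : Prop :=
  forall x y z t, mul (mul x z) (mul y t) =
    mul (mul (mul x y) z) t + mul (mul (mul y z) t) x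
    + mul (mul (mul z t) x) y + mul (mul (mul t x) y) z.

Definition malcev_algebra : Prop :=
  [/\ bilinear_prod, anticommutative & malcev_identity].

Definition jac x y z : M :=
  mul (mul x y) z + mul (mul y z) x + mul (mul z x) y.

Definition brace x y z : M :=
  mul (mul x y) z - mul (mul x z) y + 2%:R *: mul x (mul y z).

Definition hpoly y z t x u : M :=
  mul (brace (mul y z) t u) x + mul (brace (mul y z) t x) u
  + mul (brace (mul y x) z u) t + mul (brace (mul y u) z x) t.

Definition in_variety_H : Prop :=
  malcev_algebra /\ forall y z t x u, hpoly y z t x u = 0.

Definition in_centroid (f : M -> M) : Prop :=
  (forall (c : F) x y, f (c *: x + y) = c *: f x + f y) /\
  (forall x y, f (mul x y) = mul x (f y) /\ f (mul x y) = mul (f x) y).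

Definition pfun x y z t : M :=
  - brace (mul z t) x y - brace (mul y t) z x + brace (mul x t) y z.

Definition alpha_op y z t : M -> M := fun x => pfun x y z t.

Variables (E H Fe : M).

Definition inL (a : M) : Prop :=
  exists c1 c2 c3 : F, a = c1 *: E + c2 *: H + c3 *: Fe.

Definition sl2_subalgebra : Prop :=
  [/\ (forall c1 c2 c3 : F, c1 *: E + c2 *: H + c3 *: Fe = 0 ->
          [/\ c1 = 0, c2 = 0 & c3 = 0]),
      mul E H = E, mul Fe H = - Fe & mul E Fe = (2%:R : F)^-1 *: H].

Definition faithful_L : Prop :=
  forall m, m != 0 -> exists a, inL a /\ mul m a != 0.

Definition inN (m : M) : Prop := forall a b, inL a -> inL b -> jac m a b = 0.
Definition inJ (m : M) : Prop := forall a b, inL a -> inL b -> brace m a b = 0.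

Definition inU (f : M -> M) : Prop :=
  exists s : seq (F * M * M * M),
    (forall e, e \in s -> inL e.1.2 /\ inL e.2) /\
    forall x, f x = \sum_(e <- s) e.1.1.1 *: alpha_op e.1.1.2 e.1.2 e.2 x.

Definition fact_decomp : Prop :=
  (forall m, exists n j, [/\ inN n, inJ j & m = n + j]) /\
  (forall m, inN m -> inJ m -> m = 0).

(* J_M = direct sum of the modules V_{2i} = span{u_i, v_i} *)
Definition fact_J_structure : Prop :=
  exists (I : eqType) (u v : I -> M),
    [/\ (forall i, [/\ mul (u i) H = u i, mul (v i) H = - v i,
                      mul (u i) E = v i & mul (u i) Fe = 0] /\
                   mul (v i) E = 0 /\ mul (v i) Fe = - u i),
        (forall i, inJ (u i) /\ inJ (v i)),
        (forall j, inJ j -> exists s : seq (I * F * F),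
            j = \sum_(e <- s) (e.1.2 *: u e.1.1 + e.2 *: v e.1.1)) &
        (forall s : seq (I * F * F), uniq (map (fun e => e.1.1) s) ->
            \sum_(e <- s) (e.1.2 *: u e.1.1 + e.2 *: v e.1.1) = 0 ->
            forall e, e \in s -> e.1.2 = 0 /\ e.2 = 0)].

Definition fact_U_centroid : Prop := forall f, inU f -> in_centroid f.

Definition fact_N_span : Prop :=
  forall n, inN n <-> exists s : list (M * (M -> M)),
    List.Forall (fun e => inL e.1 /\ inU e.2) s /\
    n = \sum_(e <- s) e.2 e.1.

End MalcevDefs.

From HB Require Import structures.
From mathcomp Require Import all_boot all_order all_algebra.
Import GRing.Theory.
Local Open Scope ring_scope.

(* Every element of U lies in the centroid, and in an algebra on which L acts
   faithfully centroid elements commute: ((x f) g) a = (x g)(a f) = ((x g) f) a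
   for a in L.  Right composition with a centroid element g preserves U since
   alpha(m, a, b) g = alpha(m g, a, b), and N_M = L U by the known facts.
   Injectivity is a weight argument: right multiplication by H commutes with
   the centroid and has eigenvalues 1, 0, -1 on E, H, F, so f E + g H + k F = 0
   forces each summand to vanish; since sl_2 is simple, a centroid element
   killing one basis vector of L kills L, hence all of M by faithfulness.
   Multiplicativity is the defining property of the centroid. *)

Section Algebra.
Context {F : fieldType} {M : lmodType F} {mul : M -> M -> M}.

Section Bilinear.
Hypothesis mul_bilinear : bilinear_prod mul.

Lemma prodDl x y z : mul (x + y) z = mul x z + mul y z.
Proof. by have := mul_bilinear.1 1 x y z; rewrite !scale1r. Qed.

Lemma prodDr x y z : mul x (y + z) = mul x y + mul x z.
Proof. by have := mul_bilinear.2 1 x y z; rewrite !scale1r. Qed.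

Lemma prod0l z : mul 0 z = 0.
Proof. by apply: (addIr (mul 0 z)); rewrite -prodDl !add0r. Qed.

Lemma prod0r z : mul z 0 = 0.
Proof. by apply: (addIr (mul z 0)); rewrite -prodDr !add0r. Qed.

Lemma prodZl c x z : mul (c *: x) z = c *: mul x z.
Proof. by have := mul_bilinear.1 c x 0 z; rewrite !addr0 prod0l addr0. Qed.

Lemma prodNl x z : mul (- x) z = - mul x z.
Proof. by rewrite -scaleN1r prodZl scaleN1r. Qed.

Lemma prodBl x y z : mul (x - y) z = mul x z - mul y z.
Proof. by rewrite prodDl prodNl. Qed.

End Bilinear.

Section Centroid.
Context {f : M -> M}.
Hypothesis f_centroid : in_centroid mul f.

Lemma centroidD x y : f (x + y) = f x + f y.
Proof. by have := f_centroid.1 1 x y; rewrite !scale1r. Qed.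

Lemma centroid0 : f 0 = 0.
Proof. by apply: (addIr (f 0)); rewrite -centroidD !add0r. Qed.

Lemma centroidZ c x : f (c *: x) = c *: f x.
Proof. by have := f_centroid.1 c x 0; rewrite !addr0 centroid0 addr0. Qed.

Lemma centroidN x : f (- x) = - f x.
Proof. by rewrite -scaleN1r centroidZ scaleN1r. Qed.

Lemma centroidB x y : f (x - y) = f x - f y.
Proof. by rewrite centroidD centroidN. Qed.

Lemma centroid_mulr x y : f (mul x y) = mul x (f y).
Proof. by case: (f_centroid.2 x y). Qed.

Lemma centroid_mull x y : f (mul x y) = mul (f x) y.
Proof. by case: (f_centroid.2 x y). Qed.

Lemma centroid_brace1 u v w : f (brace mul u v w) = brace mul (f u) v w.
Proof.
rewrite /brace centroidD centroidB centroidZ.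
by rewrite !centroid_mull.
Qed.

Lemma centroid_brace2 u v w : f (brace mul u v w) = brace mul u (f v) w.
Proof.
rewrite /brace centroidD centroidB centroidZ.
rewrite (centroid_mull (mul u v)) (centroid_mulr u v) (centroid_mulr _ v).
by rewrite (centroid_mulr u) (centroid_mull v).
Qed.

Lemma centroid_brace3 u v w : f (brace mul u v w) = brace mul u v (f w).
Proof.
rewrite /brace centroidD centroidB centroidZ.
by rewrite (centroid_mull (mul u w)) !centroid_mulr.
Qed.

Lemma centroid_pfun x y z t : f (pfun mul x y z t) = pfun mul x (f y) z t.
Proof.
rewrite /pfun centroidD centroidB centroidN.
by rewrite centroid_brace3 centroid_brace1 centroid_mull centroid_brace2.
Qed.

End Centroid.

Section FaithfulAction.
Context {E H Fe : M}.
Hypothesis mul_bilinear : bilinear_prod mul.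
Hypothesis L_faithful : faithful_L mul E H Fe.

Lemma centroid_comm f g : in_centroid mul f -> in_centroid mul g ->
  forall x, g (f x) = f (g x).
Proof.
move=> fc gc x; apply/eqP; rewrite -subr_eq0; apply/negPn/negP => /L_faithful.
have gf_a a : mul (g (f x)) a = mul (g x) (f a).
  by rewrite -(centroid_mull gc) -(centroid_mull fc) (centroid_mulr fc)
             (centroid_mull gc).
have fg_a a : mul (f (g x)) a = mul (g x) (f a).
  by rewrite -(centroid_mull fc) (centroid_mulr fc).
by case=> a [_]; rewrite prodBl // gf_a fg_a subrr eqxx.
Qed.

Lemma centroid_eq0_of_basis f : in_centroid mul f ->
  f E = 0 -> f H = 0 -> f Fe = 0 -> forall x, f x = 0.
Proof.
move=> fc fE0 fH0 fFe0.
have fL0 a : inL E H Fe a -> f a = 0.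
  case=> [c1 [c2 [c3 ->]]].
  by rewrite !(centroidD fc) !(centroidZ fc) fE0 fH0 fFe0 !scaler0 !addr0.
move=> x; apply/eqP/negPn/negP => /L_faithful [a [La]].
by rewrite -(centroid_mull fc) (centroid_mulr fc) fL0 // prod0r ?eqxx.
Qed.

Section Sl2.
Hypothesis mul_anticomm : anticommutative mul.
Hypothesis L_sl2 : sl2_subalgebra mul E H Fe.
Hypothesis char2 : 2%:R != 0 :> F.

Let EH : mul E H = E. Proof. by case: L_sl2. Qed.
Let FeH : mul Fe H = - Fe. Proof. by case: L_sl2. Qed.
Let EFe : mul E Fe = (2%:R : F)^-1 *: H. Proof. by case: L_sl2. Qed.

Lemma centroid_H_eq0_of_E f : in_centroid mul f -> f E = 0 -> f H = 0.
Proof.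
move=> fc fE0; have /eqP : (2%:R : F)^-1 *: f H = 0.
  by rewrite -(centroidZ fc) -EFe (centroid_mull fc) fE0 prod0l.
by rewrite scaler_eq0 invr_eq0 (negbTE char2) => /eqP.
Qed.

Lemma centroid_H_eq0_of_Fe f : in_centroid mul f -> f Fe = 0 -> f H = 0.
Proof.
move=> fc fFe0; have /eqP : (2%:R : F)^-1 *: f H = 0.
  by rewrite -(centroidZ fc) -EFe (centroid_mulr fc) fFe0 prod0r.
by rewrite scaler_eq0 invr_eq0 (negbTE char2) => /eqP.
Qed.

Lemma centroid_eq0_of_H f : in_centroid mul f -> f H = 0 -> forall x, f x = 0.
Proof.
move=> fc fH0; apply: centroid_eq0_of_basis => //.
  by rewrite -EH (centroid_mulr fc) fH0 prod0r.
by apply/eqP; rewrite -oppr_eq0 -(centroidN fc) -FeH (centroid_mulr fc) fH0 prod0r.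
Qed.

Lemma sl2_weight_components_eq0 f g k :
  in_centroid mul f -> in_centroid mul g -> in_centroid mul k ->
  f E + g H + k Fe = 0 -> [/\ f E = 0, g H = 0 & k Fe = 0].
Proof.
move=> fc gc kc sum0.
have wE : mul (f E) H = f E by rewrite -(centroid_mull fc) EH.
have wH : mul (g H) H = 0 by rewrite -(centroid_mull gc) mul_anticomm centroid0.
have wFe : mul (k Fe) H = - k Fe by rewrite -(centroid_mull kc) FeH centroidN.
have diff0 : f E - k Fe = 0.
  by have := congr1 (mul^~ H) sum0; rewrite /= !prodDl // wE wH wFe addr0 prod0l.
have add0 : f E + k Fe = 0.
  by have := congr1 (mul^~ H) diff0; rewrite /= prodBl // wE wFe opprK prod0l.
have fE0 : f E = 0.
  have : (2%:R : F) *: f E = (f E - k Fe) + (f E + k Fe).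
    by rewrite addrACA addNr addr0 scaler_nat mulr2n.
  by rewrite diff0 add0 addr0 => /eqP; rewrite scaler_eq0 (negbTE char2) => /eqP.
have kFe0 : k Fe = 0 by move: add0; rewrite fE0 add0r.
by split=> //; move: sum0; rewrite fE0 kFe0 add0r addr0.
Qed.

End Sl2.

End FaithfulAction.

Section SpanU.
Context {E H Fe : M}.

Lemma inL_E : inL E H Fe E.
Proof. by exists 1, 0, 0; rewrite scale1r !scale0r !addr0. Qed.

Lemma inL_H : inL E H Fe H.
Proof. by exists 0, 1, 0; rewrite scale1r !scale0r add0r addr0. Qed.

Lemma inL_Fe : inL E H Fe Fe.
Proof. by exists 0, 0, 1; rewrite scale1r !scale0r !add0r. Qed.

Lemma inU0 : inU mul E H Fe (fun _ => 0).
Proof. by exists [::]; split=> [e|x]; rewrite ?in_nil ?big_nil. Qed.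

Lemma inUD f g :
  inU mul E H Fe f -> inU mul E H Fe g -> inU mul E H Fe (fun x => f x + g x).
Proof.
move=> [s1 [L1 f_def]] [s2 [L2 g_def]]; exists (s1 ++ s2); split=> [e|x].
  by rewrite mem_cat => /orP[/L1|/L2].
by rewrite big_cat f_def g_def.
Qed.

Lemma inUZ c f : inU mul E H Fe f -> inU mul E H Fe (fun x => c *: f x).
Proof.
move=> [s [Ls f_def]]; exists [seq (c * e.1.1.1, e.1.1.2, e.1.2, e.2) | e <- s].
split=> [e /mapP[e' /Ls Le' ->] //|x].
by rewrite big_map f_def scaler_sumr; apply: eq_bigr => e _; rewrite scalerA.
Qed.

Lemma inU_comp_centroid f g : in_centroid mul g ->
  inU mul E H Fe f -> inU mul E H Fe (fun x => g (f x)).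
Proof.
move=> gc [s [Ls f_def]]; exists [seq (e.1.1.1, g e.1.1.2, e.1.2, e.2) | e <- s].
split=> [e /mapP[e' /Ls Le' ->] //|x].
rewrite big_map f_def (big_morph g (centroidD gc) (centroid0 gc)).
by apply: eq_bigr => e _; rewrite (centroidZ gc) /alpha_op (centroid_pfun gc).
Qed.

Hypothesis U_centroid : fact_U_centroid mul E H Fe.

Lemma sum_LU_basis_decomposition (s : list (M * (M -> M))) :
  List.Forall (fun e => inL E H Fe e.1 /\ inU mul E H Fe e.2) s ->
  exists f g k, [/\ inU mul E H Fe f, inU mul E H Fe g, inU mul E H Fe k
                  & \sum_(e <- s) e.2 e.1 = f E + g H + k Fe].
Proof.
elim: s => [_|[a h] s IHs /List.Forall_cons_iff [[/= La Uh] /IHs]].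
  exists (fun _ => 0), (fun _ => 0), (fun _ => 0).
  by split; rewrite ?big_nil ?addr0 //; apply: inU0.
move=> [f [g [k [Uf Ug Uk sum_s]]]]; have [c1 [c2 [c3 ->]]] := La.
have hc := U_centroid _ Uh.
exists (fun x => c1 *: h x + f x), (fun x => c2 *: h x + g x),
       (fun x => c3 *: h x + k x).
split; try by apply: inUD => //; apply: inUZ.
rewrite big_cons /= sum_s !(centroidD hc) !(centroidZ hc).
by rewrite addrACA (addrACA (c1 *: h E)).
Qed.

Hypothesis N_span : fact_N_span mul E H Fe.

Lemma inN_basis_decomposition n : inN mul E H Fe n <->
  exists f g k, [/\ inU mul E H Fe f, inU mul E H Fe g, inU mul E H Fe k
                  & n = f E + g H + k Fe].
Proof.
split=> [/N_span [s [Ls ->]]|[f [g [k [Uf Ug Uk ->]]]]].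
  exact: sum_LU_basis_decomposition.
apply/N_span; exists [:: (E, f); (H, g); (Fe, k)].
split; first by do !(apply: List.Forall_cons; first split);
  auto using List.Forall_nil, inL_E, inL_H, inL_Fe.
by rewrite !big_cons big_nil /= addr0 !addrA.
Qed.

End SpanU.

End Algebra.

Theorem propositionc1 (F : fieldType) (M : lmodType F) (mul : M -> M -> M)
    (E H Fe : M)
    (char2 : 2%:R != 0 :> F) (char3 : 3%:R != 0 :> F)
    (HM : in_variety_H mul)
    (HL : sl2_subalgebra mul E H Fe)
    (Hfaith : faithful_L mul E H Fe)
    (K1 : fact_decomp mul E H Fe)
    (K2 : fact_J_structure mul E H Fe)
    (K3 : fact_U_centroid mul E H Fe)
    (K4 : fact_N_span mul E H Fe) :
  (* U is a commutative associative subalgebra of Gamma(M) under composition *)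
  [/\ (forall f, inU mul E H Fe f -> in_centroid mul f),
      (forall f g, inU mul E H Fe f -> inU mul E H Fe g ->
          inU mul E H Fe (fun x => g (f x))) &
      (forall f g, inU mul E H Fe f -> inU mul E H Fe g ->
          forall x, g (f x) = f (g x))] /\
  (* L (x) U -> N_M, a (x) alpha |-> a alpha, is a bijection
     (L (x) U identified with U^3 via the basis E, H, F of L) ... *)
  [/\ (forall n, inN mul E H Fe n <->
          exists f g k, [/\ inU mul E H Fe f, inU mul E H Fe g, inU mul E H Fe k
                          & n = f E + g H + k Fe]),
      (forall f g k, inU mul E H Fe f -> inU mul E H Fe g -> inU mul E H Fe k ->
          f E + g H + k Fe = 0 ->
          forall x, [/\ f x = 0, g x = 0 & k x = 0]) &
  (* ... and an algebra homomorphism: (a alpha)(b beta) = (ab)(alpha beta) *)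
      (forall a b f g, inL E H Fe a -> inL E H Fe b ->
          inU mul E H Fe f -> inU mul E H Fe g ->
          mul (f a) (g b) = g (f (mul a b)))].
Proof.
have [[mul_bil mul_anti _] _] := HM.
have eq0_of_H := centroid_eq0_of_H mul_bil Hfaith HL.
split; split.
- exact: K3.
- by move=> f g Uf /K3 gc; apply: inU_comp_centroid.
- by move=> f g /K3 fc /K3 gc; apply: (centroid_comm mul_bil Hfaith).
- exact: (inN_basis_decomposition K3 K4).
- move=> f g k /K3 fc /K3 gc /K3 kc sum0 x.
  have [fE0 gH0 kFe0] :=
    sl2_weight_components_eq0 mul_bil mul_anti HL char2 _ _ _ fc gc kc sum0.
  split; apply: eq0_of_H => //.
  + exact: (centroid_H_eq0_of_E mul_bil HL char2).
  + exact: (centroid_H_eq0_of_Fe mul_bil HL char2).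
- by move=> a b f g _ _ /K3 fc /K3 gc; rewrite (centroid_mull fc) (centroid_mulr gc).
Qed.
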